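(* Consider a single invocation of an MPI barrier among a set of participating MPI ranks, and a checkpoint coordinator that sends a first message to each participating rank, each rank replying with its current status relative to the barrier (not yet entered, inside, or exited). If at least one of the replies to the first messages reports that its rank has exited the barrier, and the coordinator, after receiving these replies, sends a second message to each participating rank, then each participating rank will reply to the second message that it has entered the barrier (and possibly also exited it).
   Context: Events (sending/receiving messages, entering/exiting a barrier) are ordered by Lamport's happens-before relation; a rank's reply to a message reflects its state at the moment of replying, which happens after it received the message and before the coordinator receives the reply. Barrier axiom (assumed): for a given invocation of an MPI barrier, it never happens that a rank A exits the barrier before (under happens-before) another participating rank B enters that barrier. *)

Inductive barrier_status := NotEntered | Inside | Exited.

(* An execution: events ordered by Lamport's happens-before (a strict
   partial order); each event is located at a rank (Some r) or at the
   checkpoint coordinator (None); events at one location are totally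
   ordered (sequential processes).  enter r / exit r are the (possibly
   absent) events at which rank r enters / exits the barrier invocation. *)
Record execution := {
  Ev : Type;
  hb : Ev -> Ev -> Prop;
  hb_irrefl : forall e, ~ hb e e;
  hb_trans : forall e1 e2 e3, hb e1 e2 -> hb e2 e3 -> hb e1 e3;
  Rank : Type;
  participant : Rank -> Prop;
  loc : Ev -> option Rank;
  loc_total : forall e1 e2, loc e1 = loc e2 -> e1 = e2 \/ hb e1 e2 \/ hb e2 e1;
  enter : Rank -> option Ev;
  exit : Rank -> option Ev;
  enter_loc : forall r x, enter r = Some x -> loc x = Some r;
  exit_loc : forall r x, exit r = Some x -> loc x = Some r;
  exit_after_enter : forall r x, exit r = Some x ->
      exists y, enter r = Some y /\ hb y x;
  (* Barrier axiom: no participating rank A exits before (under hb) a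
     participating rank B enters (in particular A cannot exit if B never
     enters). *)
  barrier_axiom : forall A B xa, participant A -> participant B ->
      exit A = Some xa -> exists xb, enter B = Some xb /\ ~ hb xa xb
}.

Definition status_at (X : execution) (r : Rank X) (e : Ev X)
    (s : barrier_status) : Prop :=
  match s with
  | Exited => exists x, exit X r = Some x /\ hb X x e
  | Inside => (exists x, enter X r = Some x /\ hb X x e) /\
              ~ (exists x, exit X r = Some x /\ hb X x e)
  | NotEntered => ~ (exists x, enter X r = Some x /\ hb X x e)
  end.

(* The exit reported in the first round happens before the coordinator sends
   its second messages, hence before every second reply.  By the barrier
   axiom no rank enters after that exit; since a rank's entry and its second
   reply are events of the same sequential process, the entry precedes the
   reply. *)

From Stdlib Require Import Classical.

Section Barrier.

Variable X : execution.

Definition entered_before (r : Rank X) (e : Ev X) : Prop :=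
  exists x, enter X r = Some x /\ hb X x e.

Lemma status_entered_before (r : Rank X) (e : Ev X) :
  entered_before r e -> status_at X r e Inside \/ status_at X r e Exited.
Proof.
  intros Hentered.
  destruct (classic (exists x, exit X r = Some x /\ hb X x e)) as [Hexit | Hexit].
  - right. exact Hexit.
  - left. split; assumption.
Qed.

Lemma hb_or_not_hb_same_loc (e1 e2 : Ev X) :
  loc X e1 = loc X e2 -> ~ hb X e2 e1 -> e1 = e2 \/ hb X e1 e2.
Proof.
  intros Hloc Hnot.
  destruct (loc_total X e1 e2 Hloc) as [Heq | [H12 | H21]].
  - left. exact Heq.
  - right. exact H12.
  - contradiction.
Qed.

Lemma entered_before_of_exit_before (A r : Rank X) (xa e : Ev X) :
  participant X A -> participant X r -> exit X A = Some xa ->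
  hb X xa e -> loc X e = Some r -> entered_before r e.
Proof.
  intros HA Hr Hxa Hxa_e He.
  destruct (barrier_axiom X A r xa HA Hr Hxa) as [xb [Hxb Hnot]].
  exists xb. split; [exact Hxb |].
  assert (Hloc : loc X xb = loc X e) by (rewrite (enter_loc X r xb Hxb), He; reflexivity).
  assert (Hnot_e_xb : ~ hb X e xb) by (intros He_xb; apply Hnot, (hb_trans X _ e); assumption).
  destruct (hb_or_not_hb_same_loc xb e Hloc Hnot_e_xb) as [Heq | Hxb_e].
  - subst xb. contradiction.
  - exact Hxb_e.
Qed.

End Barrier.

Theorem lemma1 (X : execution)
  (* first round: coordinator sends, rank receives, rank replies,
     coordinator receives the reply *)
  (send1 recv1 reply1 getrep1 : Rank X -> Ev X)
  (* second round *)
  (send2 recv2 reply2 getrep2 : Rank X -> Ev X)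
  (Hloc_send1 : forall r, loc X (send1 r) = None)
  (Hloc_recv1 : forall r, loc X (recv1 r) = Some r)
  (Hloc_reply1 : forall r, loc X (reply1 r) = Some r)
  (Hloc_getrep1 : forall r, loc X (getrep1 r) = None)
  (Hloc_send2 : forall r, loc X (send2 r) = None)
  (Hloc_recv2 : forall r, loc X (recv2 r) = Some r)
  (Hloc_reply2 : forall r, loc X (reply2 r) = Some r)
  (Hloc_getrep2 : forall r, loc X (getrep2 r) = None)
  (* message and reply ordering *)
  (H1a : forall r, participant X r -> hb X (send1 r) (recv1 r))
  (H1b : forall r, participant X r -> hb X (recv1 r) (reply1 r))
  (H1c : forall r, participant X r -> hb X (reply1 r) (getrep1 r))
  (* the second messages are sent after receiving all first replies *)
  (Hafter : forall r r', participant X r -> participant X r' ->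
              hb X (getrep1 r') (send2 r))
  (H2a : forall r, participant X r -> hb X (send2 r) (recv2 r))
  (H2b : forall r, participant X r -> hb X (recv2 r) (reply2 r))
  (H2c : forall r, participant X r -> hb X (reply2 r) (getrep2 r))
  (* at least one first reply reports that its rank has exited *)
  (Hexited : exists A, participant X A /\ status_at X A (reply1 A) Exited) :
  forall r, participant X r ->
    status_at X r (reply2 r) Inside \/ status_at X r (reply2 r) Exited.
Proof.
  intros r Hr.
  destruct Hexited as [A [HA [xa [Hxa Hxa_reply1]]]].
  assert (Hxa_reply2 : hb X xa (reply2 r)).
  { apply (hb_trans X _ (reply1 A)); [exact Hxa_reply1 |].
    apply (hb_trans X _ (getrep1 A)); [apply H1c, HA |].
    apply (hb_trans X _ (send2 r)); [apply Hafter; assumption |].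
    apply (hb_trans X _ (recv2 r)); [apply H2a, Hr | apply H2b, Hr]. }
  apply status_entered_before.
  exact (entered_before_of_exit_before X A r xa (reply2 r) HA Hr Hxa
           Hxa_reply2 (Hloc_reply2 r)).
Qed.
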